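(* For any $\alpha\in\mathbb{R}$, a solution $u=u(x,t)$ of the Cauchy problem $$u_t+\tfrac12 u_{xx}=0,\qquad u(x,0)=x^\alpha,$$ is given by $u(x,t)=\mathcal{H}_\alpha(x,t)$, where the initial condition is understood as $\lim_{t\to 0^+}u(x,t)=x^\alpha$.
   Context: $U(a,z)$ is the standard (Whittaker) parabolic cylinder function, $D_\nu(z)=U(-\nu-\tfrac12,z)$, and for $\alpha\in\mathbb{R}$, $t>0$: $\mathcal{H}_\alpha(x,t)=t^{\frac{\alpha}{2}}e^{\frac{x^2}{4t}}U(-\alpha-\tfrac12,\tfrac{x}{\sqrt t})$. *)

From Stdlib Require Import Reals Lra.
From Coquelicot Require Import Coquelicot.
Open Scope R_scope.

(* [is_pcf_U a f]: f is the standard (Whittaker) parabolic cylinder function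
   U(a, .) restricted to the real line, characterised as in DLMF 12.2/12.9.1:
   f solves Weber's equation  w'' = (z^2/4 + a) w  on R, and is the solution
   recessive at +oo normalised by  U(a,z) ~ z^(-a-1/2) e^(-z^2/4)  (z -> +oo),
   i.e. f(z) * z^(a+1/2) * e^(z^2/4) -> 1.  This determines U(a,.) uniquely. *)
Definition is_pcf_U (a : R) (f : R -> R) : Prop :=
  (forall z, ex_derive f z /\ is_derive (Derive f) z ((z ^ 2 / 4 + a) * f z)) /\
  is_lim (fun z => f z * Rpower z (a + / 2) * exp (z ^ 2 / 4)) p_infty 1.

Definition calH (U : R -> R -> R) (alpha x t : R) : R :=
  Rpower t (alpha / 2) * exp (x ^ 2 / (4 * t)) * U (- alpha - / 2) (x / sqrt t).

From Stdlib Require Import Reals Lra.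
From Coquelicot Require Import Coquelicot.
Open Scope R_scope.

(* With z = x / sqrt t and w(z) = e^(z^2/4) U(-alpha-1/2, z), one has
   H_alpha(x,t) = t^(alpha/2) w(z).  Weber's equation for U turns into the
   Hermite equation w'' = z w' - alpha w, and for any solution w the similarity
   form gives d_t H = t^(alpha/2-1) (alpha w - z w') / 2 and
   d_xx H = t^(alpha/2-1) w'', so d_t H + d_xx H / 2 = 0.  For the initial value,
   t^(alpha/2) = x^alpha z^(-alpha), hence
   H_alpha(x,t) = x^alpha * U(-alpha-1/2, z) z^(-alpha) e^(z^2/4), and the second
   factor tends to 1 as t -> 0+ (i.e. z -> +oo) by the normalisation of U. *)

Definition weber_solution (a : R) (f : R -> R) : Prop :=
  forall z, ex_derive f z /\ is_derive (Derive f) z ((z ^ 2 / 4 + a) * f z).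

Definition hermite_fun (f : R -> R) (z : R) : R := exp (z ^ 2 / 4) * f z.

Lemma is_derive_hermite_fun (f : R -> R) (z : R) :
  ex_derive f z ->
  is_derive (hermite_fun f) z (exp (z ^ 2 / 4) * (z / 2 * f z + Derive f z)).
Proof.
  intros f_ex; unfold hermite_fun; auto_derive; [exact f_ex |].
  change (fun u => f u) with f.
  replace (z * (z * 1) * / 4) with (z ^ 2 / 4) by (unfold Rdiv; ring); field.
Qed.

Lemma hermite_fun_ode (alpha : R) (f : R -> R) :
  weber_solution (- alpha - / 2) f ->
  forall z, is_derive (Derive (hermite_fun f)) z
              (z * Derive (hermite_fun f) z - alpha * hermite_fun f z).
Proof.
  intros weber z.
  assert (D_hermite : forall y, Derive (hermite_fun f) y
                                = exp (y ^ 2 / 4) * (y / 2 * f y + Derive f y)).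
  { intro y; apply is_derive_unique, is_derive_hermite_fun, weber. }
  apply (is_derive_ext (fun y => exp (y ^ 2 / 4) * (y / 2 * f y + Derive f y))).
  { intro y; symmetry; apply D_hermite. }
  destruct (weber z) as [f_ex f_weber].
  rewrite D_hermite; unfold hermite_fun; auto_derive.
  - split; [exact f_ex | split; [eexists; exact f_weber | tauto]].
  - change (fun u => f u) with f; change (fun u => Derive f u) with (Derive f).
    rewrite (is_derive_unique _ _ _ f_weber).
    replace (z * (z * 1) * / 4) with (z ^ 2 / 4) by (unfold Rdiv; ring); field.
Qed.

Section SimilaritySolution.

Variables (alpha : R) (w : R -> R).
Hypothesis w_ex_derive : forall z, ex_derive w z.
Hypothesis w_hermite : forall z, is_derive (Derive w) z (z * Derive w z - alpha * w z).

Definition similarity_solution (x t : R) : R := Rpower t (alpha / 2) * w (x / sqrt t).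

Section FixedTime.

Variable t : R.
Hypothesis t_pos : 0 < t.

Let sqrt_t_pos : 0 < sqrt t.
Proof. apply sqrt_lt_R0, t_pos. Qed.

Let sqrt_t_sqr : sqrt t * sqrt t = t.
Proof. apply sqrt_sqrt; lra. Qed.

Lemma is_derive_similarity_space (x : R) :
  is_derive (fun y => similarity_solution y t) x
    (Rpower t (alpha / 2) / sqrt t * Derive w (x / sqrt t)).
Proof.
  unfold similarity_solution; auto_derive.
  - apply w_ex_derive.
  - change (fun u => w u) with w; change (x * / sqrt t) with (x / sqrt t); field; lra.
Qed.

Lemma is_derive_similarity_space2 (x : R) :
  is_derive (Derive (fun y => similarity_solution y t)) x
    (Rpower t (alpha / 2) / t
     * (x / sqrt t * Derive w (x / sqrt t) - alpha * w (x / sqrt t))).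
Proof.
  apply (is_derive_ext (fun y => Rpower t (alpha / 2) / sqrt t * Derive w (y / sqrt t))).
  { intro y; symmetry; apply is_derive_unique, is_derive_similarity_space. }
  auto_derive.
  - eexists; apply w_hermite.
  - change (fun u => Derive w u) with (Derive w).
    change (x * / sqrt t) with (x / sqrt t).
    rewrite (is_derive_unique _ _ _ (w_hermite _)).
    set (c := Rpower t (alpha / 2)); set (s := sqrt t) in *; rewrite <- sqrt_t_sqr.
    field; lra.
Qed.

Lemma is_derive_similarity_time (x : R) :
  is_derive (fun s => similarity_solution x s) t
    (Rpower t (alpha / 2) / t
     * (alpha / 2 * w (x / sqrt t) - x / sqrt t / 2 * Derive w (x / sqrt t))).
Proof.
  unfold similarity_solution, Rpower; auto_derive.
  - repeat split; try lra. apply w_ex_derive.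
  - change (fun u => w u) with w; change (x * / sqrt t) with (x / sqrt t).
    rewrite sqrt_t_sqr; field; lra.
Qed.

End FixedTime.

Lemma similarity_backward_heat (H : R -> R -> R) :
  (forall y s, 0 < s -> H y s = similarity_solution y s) ->
  forall x t, 0 < t ->
    ex_derive (fun s => H x s) t /\
    ex_derive (fun y => H y t) x /\
    ex_derive (Derive (fun y => H y t)) x /\
    Derive (fun s => H x s) t + / 2 * Derive_n (fun y => H y t) 2 x = 0.
Proof.
  intros H_agree x t t_pos.
  assert (agree_time : locally t (fun s => similarity_solution x s = H x s)).
  { apply (filter_imp (fun s => 0 < s)); [| exact (open_gt 0 t t_pos)].
    intros s s_pos; symmetry; apply H_agree, s_pos. }
  assert (agree_space : forall y, similarity_solution y t = H y t).
  { intro y; symmetry; apply H_agree, t_pos. }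
  pose proof (is_derive_ext_loc _ _ t _ agree_time
                (is_derive_similarity_time t t_pos x)) as dt.
  pose proof (is_derive_ext _ _ x _ agree_space
                (is_derive_similarity_space t t_pos x)) as dx.
  pose proof (is_derive_ext _ _ x _ (fun y => Derive_ext _ _ y agree_space)
                (is_derive_similarity_space2 t t_pos x)) as dxx.
  split; [| split; [| split]].
  - exact (ex_intro _ _ dt).
  - exact (ex_intro _ _ dx).
  - exact (ex_intro _ _ dxx).
  - change (Derive_n (fun y => H y t) 2 x) with (Derive (Derive (fun y => H y t)) x).
    change (fun s => H x s) with (H x).
    rewrite (is_derive_unique _ _ _ dt), (is_derive_unique _ _ _ dxx).
    unfold Rdiv; ring.
Qed.

End SimilaritySolution.

Lemma filterlim_div_sqrt_at_right0 (x : R) :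
  0 < x -> filterlim (fun t => x / sqrt t) (at_right 0) (Rbar_locally p_infty).
Proof.
  intros x_pos.
  assert (scale : filterlim (Rmult (x ^ 2)) (Rbar_locally p_infty) (Rbar_locally p_infty)).
  { replace p_infty with (Rbar_mult (x ^ 2) p_infty) at 2.
    - apply filterlim_Rbar_mult_l.
    - apply is_Rbar_mult_unique, is_Rbar_mult_sym, is_Rbar_mult_p_infty_pos.
      exact (pow_lt x 2 x_pos). }
  apply (filterlim_ext_loc (fun t => sqrt (x ^ 2 * / t))).
  - exists (mkposreal 1 Rlt_0_1); intros t _ t_pos.
    rewrite <- (sqrt_pow2 x) at 2 by lra.
    apply sqrt_div; [apply pow2_ge_0 | exact t_pos].
  - eapply filterlim_comp; [| exact filterlim_sqrt_p].
    eapply filterlim_comp; [exact filterlim_Rinv_0_right | exact scale].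
Qed.

Lemma div_sqrt_sqr (x t : R) : 0 < t -> (x / sqrt t) ^ 2 / 4 = x ^ 2 / (4 * t).
Proof.
  intros t_pos.
  rewrite <- (pow2_sqrt t) at 2 by lra.
  field; apply Rgt_not_eq, sqrt_lt_R0, t_pos.
Qed.

Lemma calH_similarity (U : R -> R -> R) (alpha x t : R) :
  0 < t ->
  calH U alpha x t = similarity_solution alpha (hermite_fun (U (- alpha - / 2))) x t.
Proof.
  intros t_pos; unfold calH, similarity_solution, hermite_fun.
  rewrite div_sqrt_sqr by exact t_pos; ring.
Qed.

Lemma calH_backward_heat (U : R -> R -> R) (alpha : R) :
  weber_solution (- alpha - / 2) (U (- alpha - / 2)) ->
  forall x t, 0 < t ->
    ex_derive (fun s => calH U alpha x s) t /\
    ex_derive (fun y => calH U alpha y t) x /\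
    ex_derive (Derive (fun y => calH U alpha y t)) x /\
    Derive (fun s => calH U alpha x s) t
      + / 2 * Derive_n (fun y => calH U alpha y t) 2 x = 0.
Proof.
  intros weber; apply (similarity_backward_heat alpha (hermite_fun (U (- alpha - / 2)))).
  - intro z; eexists; apply is_derive_hermite_fun, weber.
  - apply hermite_fun_ode, weber.
  - intros y s; apply calH_similarity.
Qed.

Lemma calH_normalised (U : R -> R -> R) (alpha x t : R) :
  0 < x -> 0 < t ->
  let a := - alpha - / 2 in
  let z := x / sqrt t in
  calH U alpha x t = Rpower x alpha * (U a z * Rpower z (a + / 2) * exp (z ^ 2 / 4)).
Proof.
  intros x_pos t_pos a z; unfold calH, z, a.
  rewrite div_sqrt_sqr by exact t_pos.
  replace (- alpha - / 2 + / 2) with (- alpha) by ring.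
  unfold Rpower.
  rewrite ln_div, <- Rpower_sqrt, ln_Rpower by (try apply sqrt_lt_R0; lra).
  replace (exp (alpha / 2 * ln t))
    with (exp (alpha * ln x) * exp (- alpha * (ln x - / 2 * ln t)))
    by (rewrite <- exp_plus; f_equal; field).
  ring.
Qed.

Lemma calH_at_right0 (U : R -> R -> R) (alpha x : R) :
  let a := - alpha - / 2 in
  is_lim (fun z => U a z * Rpower z (a + / 2) * exp (z ^ 2 / 4)) p_infty 1 ->
  0 < x ->
  filterlim (fun t => calH U alpha x t) (at_right 0) (locally (Rpower x alpha)).
Proof.
  intros a normalisation x_pos.
  set (G := fun z => U a z * Rpower z (a + / 2) * exp (z ^ 2 / 4)) in normalisation.
  apply (is_lim_scal_l _ (Rpower x alpha)) in normalisation.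
  simpl in normalisation; rewrite Rmult_1_r in normalisation.
  apply (filterlim_ext_loc (fun t => Rpower x alpha * G (x / sqrt t))).
  - exists (mkposreal 1 Rlt_0_1); intros t _ t_pos.
    symmetry; apply calH_normalised; assumption.
  - exact (filterlim_comp _ _ _ _ _ _ _ _
             (filterlim_div_sqrt_at_right0 x x_pos) normalisation).
Qed.

Theorem mainTheorem4 :
  forall (U : R -> R -> R), (forall a : R, is_pcf_U a (U a)) ->
  forall alpha : R,
    (forall x t : R, 0 < x -> 0 < t ->
       ex_derive (fun s => calH U alpha x s) t /\
       ex_derive (fun y => calH U alpha y t) x /\
       ex_derive (Derive (fun y => calH U alpha y t)) x /\
       Derive (fun s => calH U alpha x s) t
         + / 2 * Derive_n (fun y => calH U alpha y t) 2 x = 0) /\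
    (forall x : R, 0 < x ->
       filterlim (fun t => calH U alpha x t) (at_right 0) (locally (Rpower x alpha))).
Proof.
  intros U pcf alpha.
  destruct (pcf (- alpha - / 2)) as [weber normalisation].
  split.
  - intros x t _; exact (calH_backward_heat U alpha weber x t).
  - intros x; exact (calH_at_right0 U alpha x normalisation).
Qed.
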